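(* Let $G$ and $H$ be finite abelian groups, written additively, of the same even order $k>2$, let $f:G\to H$ be semi-planar, and suppose $S(G,H;f)$ splits into two substructures $S_1$ and $S_2$ with $\mathcal{L}(0,0)\in S_1$. For $i=1,2$ let $P_0^i=\{b\in H : \mathcal{L}(0,b)\in S_i\}$. Then $P_0^1$ is a subgroup of $H$ of index $2$, and $P_0^2$ is its (non-trivial) coset $H\setminus P_0^1$.
   Context: A function $f:G\to H$ is semi-planar if for every non-identity $a\in G$ and every $y\in H$, the equation $f(x+a)-f(x)=y$ has either $0$ or $2$ solutions $x\in G$. The incidence structure $S(G,H;f)$ has points $(x,y)\in G\times H$ and lines $\mathcal{L}(a,b)$ for $(a,b)\in G\times H$, with $(x,y)$ incident with $\mathcal{L}(a,b)$ iff $y=f(x-a)+b$. Its incidence graph is the bipartite graph on points and lines with an edge for each incident pair. $S(G,H;f)$ splits into two substructures $S_1,S_2$ if its incidence graph has exactly two connected components; $S_1,S_2$ are the incidence structures formed by the points and lines of the two components, and $\mathcal{L}(a,b)\in S_i$ means the line lies in component $S_i$. *)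

From HB Require Import structures.
From mathcomp Require Import all_boot all_order all_algebra all_fingroup.
Set Implicit Arguments. Unset Strict Implicit. Unset Printing Implicit Defensive.
Import GRing.Theory.
Local Open Scope ring_scope.

Definition semi_planar (G H : finZmodType) (f : G -> H) : Prop :=
  forall (a : G) (y : H), a != 0 ->
    #|[set x : G | f (x + a) - f x == y]| \in [:: 0%N; 2%N].

(* Vertices of the incidence graph of S(G,H;f):
   inl (x,y) = point (x,y), inr (a,b) = line L(a,b). *)
Definition vertex (G H : finZmodType) : finType := ((G * H) + (G * H))%type.

Definition incident (G H : finZmodType) (f : G -> H) (p l : G * H) : bool :=
  p.2 == f (p.1 - l.1) + l.2.

Definition inc_adj (G H : finZmodType) (f : G -> H) : rel (vertex G H) :=
  fun u v => match u, v with
             | inl p, inr l => incident f p l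
             | inr l, inl p => incident f p l
             | _, _ => false
             end.

Definition line_v (G H : finZmodType) (a : G) (b : H) : vertex G H := inr (a, b).

(* S(G,H;f) splits into two substructures: the incidence graph has exactly
   two connected components. *)
Definition splits_in_two (G H : finZmodType) (f : G -> H) : Prop :=
  n_comp (connect (@inc_adj G H f)) (@predT (vertex G H)) = 2%N.

Definition P01 (G H : finZmodType) (f : G -> H) : {set H} :=
  [set b : H | connect (@inc_adj G H f) (line_v 0 0) (line_v 0 b)].

Definition P02 (G H : finZmodType) (f : G -> H) : {set H} :=
  [set b : H | ~~ connect (@inc_adj G H f) (line_v 0 0) (line_v 0 b)].

From HB Require Import structures.
From mathcomp Require Import all_boot all_order all_algebra all_fingroup.
Import GRing.Theory FinRing.Theory.

(* Only the translations (x, y) |-> (x + g, y + h) of points and lines are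
   needed.  They are
   automorphisms of the incidence graph, so P_0^1 is closed under addition.
   Every vertex is joined to some line L(0, b) (through the point (a, f a) for
   a line L(a, b)), so with two components some L(0, b0) lies in S_2; a
   translate by b0 then maps P_0^1 into P_0^2 and back, because two vertices
   outside the component of L(0, 0) must share the other component.  Hence
   H is the disjoint union of P_0^1 and its translate P_0^1 + b0. *)

Section ConnectedComponents.
Context {T : finType} {e : rel T}.

Lemma connect_connect : connect (connect e) =2 connect e.
Proof.
move=> x y; apply/idP/idP; first by apply: connect_sub.
by apply: connect_sub => u v /connect1/connect1.
Qed.

Lemma n_comp_connect_rel (a : {pred T}) : n_comp (connect e) a = n_comp e a.
Proof. exact: (eq_n_comp connect_connect). Qed.

Hypothesis sym_e : connect_sym e.

Lemma n_comp_connected {x} :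
  (forall y, connect e x y) -> n_comp e T = 1%N.
Proof.
move=> conn_x; rewrite -(n_comp_connect sym_e x).
by apply: eq_n_comp_r => y; rewrite !inE conn_x.
Qed.

Lemma n_comp2_connect {x y z} : n_comp e T = 2%N ->
  ~~ connect e x y -> ~~ connect e x z -> connect e y z.
Proof.
move=> ncomp2 nxy nxz; apply: contraT => nyz.
set rs := [seq fingraph.root e v | v <- [:: x; y; z]].
have uniq_rs : uniq rs by rewrite /= !inE !(root_connect sym_e) negb_or nxy nxz nyz.
have : (#|rs| <= n_comp e T)%N.
  apply: subset_leq_card; apply/subsetP => r.
  by rewrite !inE => /or3P[] /eqP ->; rewrite roots_root.
by rewrite (card_uniqP uniq_rs) ncomp2.
Qed.

End ConnectedComponents.

Lemma indexg_setC_eq2 {gT : finGroupType} (K : {group gT}) :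
  #|~: K| = #|K| -> #|[set: gT] : K|%g = 2%N.
Proof.
move=> cardKC; have := Lagrange (subsetT K); have := cardsC K.
rewrite cardKC cardsT => <- /eqP; rewrite addnn -muln2 eqn_pmul2l ?cardG_gt0 //.
by move/eqP.
Qed.

Section IncidenceGraph.
Local Open Scope ring_scope.
Context {G H : finZmodType} (f : G -> H).

Local Notation conn := (connect (inc_adj f)).

Definition vshift (g : G) (h : H) (v : vertex G H) : vertex G H :=
  match v with
  | inl p => inl (p.1 + g, p.2 + h)
  | inr l => inr (l.1 + g, l.2 + h)
  end.

Lemma incident_shift g h p l :
  incident f (p.1 + g, p.2 + h) (l.1 + g, l.2 + h) = incident f p l.
Proof. by rewrite /incident /= opprD addrACA subrr addr0 addrA (inj_eq (addIr h)). Qed.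

Lemma inc_adj_vshift g h u v :
  inc_adj f (vshift g h u) (vshift g h v) = inc_adj f u v.
Proof. by case: u => [p|l]; case: v => [q|m] //=; rewrite incident_shift. Qed.

Lemma inc_adj_sym : symmetric (inc_adj f).
Proof. by case=> [p|l]; case=> [q|m]. Qed.

Lemma inc_adj_connect_sym : connect_sym (inc_adj f).
Proof. exact: sym_connect_sym inc_adj_sym. Qed.

Lemma connect_vshift g h {u v} : conn u v -> conn (vshift g h u) (vshift g h v).
Proof.
move=> /connectP[p + ->]; elim: p u => [|w p IHp] u //= /andP[uw pw].
by apply: connect_trans (IHp w pw); apply: connect1; rewrite inc_adj_vshift.
Qed.

Lemma connect_line0_shift h b b' :
  conn (line_v 0 b) (line_v 0 b') -> conn (line_v 0 (b + h)) (line_v 0 (b' + h)).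
Proof. by move/(connect_vshift 0 h); rewrite /= !addr0. Qed.

Lemma P01_group_set : group_set (P01 f).
Proof.
apply/group_setP; split=> [|x y]; first by rewrite zmod1gE inE.
rewrite !inE zmodMgE => conn_x /(connect_line0_shift x).
by rewrite add0r addrC; apply: connect_trans.
Qed.

Lemma P02_setD : P02 f = [set: H] :\: P01 f.
Proof. by apply/setP => b; rewrite !inE andbT. Qed.

Lemma connect_lines0 :
  (forall b, conn (line_v 0 0) (line_v 0 b)) -> forall v, conn (line_v 0 0) v.
Proof.
move=> lines0.
have lines : forall a b, conn (line_v 0 0) (line_v a b).
  move=> a b; pose b1 := f a - f 0.
  have to_point : conn (line_v 0 0) (inl (a, f a)).
    by apply: connect1; rewrite /= /incident /= subr0 addr0.
  have to_line : conn (inl (a, f a)) (line_v a b1).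
    by apply: connect1; rewrite /= /incident /= subrr addrC subrK.
  have along : conn (line_v a b1) (line_v a b).
    by have := connect_vshift a b1 (lines0 (b - b1)); rewrite /= !add0r subrK.
  exact: connect_trans to_point (connect_trans to_line along).
case=> [[x y]|[a b]]; last exact: lines.
apply: connect_trans (lines 0 (y - f x)) (connect1 _).
by rewrite /= /incident /= subr0 addrC subrK.
Qed.

Hypothesis split2 : splits_in_two f.

Let ncomp2 : n_comp (inc_adj f) predT = 2%N.
Proof. by rewrite -n_comp_connect_rel. Qed.

Lemma P02_neq0 : P02 f != set0.
Proof.
apply/set0Pn; apply/existsP; apply: contraT; rewrite negb_exists => /forallP nP02.
have lines0 b : conn (line_v 0 0) (line_v 0 b) by have := nP02 b; rewrite inE negbK.
have := n_comp_connected inc_adj_connect_sym (connect_lines0 lines0).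
by rewrite ncomp2.
Qed.

Lemma P02_shift {b0} : b0 \in P02 f -> P02 f = [set b + b0 | b in P01 f].
Proof.
rewrite inE => nconn_b0; apply/setP => b; apply/idP/imsetP.
  rewrite inE => nconn_b; exists (b - b0); last by rewrite subrK.
  have := n_comp2_connect inc_adj_connect_sym ncomp2 nconn_b0 nconn_b.
  by move/(connect_line0_shift (- b0)); rewrite subrr inE.
case=> b' + ->; rewrite !inE => /(connect_line0_shift b0); rewrite add0r => conn_b'.
apply: contra nconn_b0 => conn_b; apply: connect_trans conn_b _.
by rewrite inc_adj_connect_sym.
Qed.

Lemma card_P02 : #|P02 f| = #|P01 f|.
Proof.
have /set0Pn[b0 P02_b0] := P02_neq0.
by rewrite (P02_shift P02_b0) card_imset //; apply: addIr.
Qed.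

End IncidenceGraph.

Theorem theorem2 (G H : finZmodType) (f : G -> H) :
  #|G| = #|H| -> ~~ odd #|G| -> (2 < #|G|)%N ->
  semi_planar f -> splits_in_two f ->
  [/\ group_set (P01 f), (#|[set: H] : P01 f|)%g = 2%N,
      P02 f = [set: H] :\: P01 f & P02 f != set0].
Proof.
move=> _ _ _ _ split2; have P01_gs := P01_group_set f.
split=> //; [|exact: P02_setD|exact: P02_neq0].
apply: (indexg_setC_eq2 (Group P01_gs)) => /=.
by rewrite -setTD -P02_setD card_P02.
Qed.
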